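(* Let $N\ge2$ and suppose $U$ satisfies Assumption (U), $G$ satisfies Assumption (G1) (see context), and $\sum_{i=1}^NU(q_i)+\sum_{1\le i<j\le N}G(q_i-q_j)\ge1$ for all $\mathbf{q}\in\mathcal{D}$. Then there exist positive constants $c_G$ (small) and $C_G$ (large) independent of $\mathbf{q}$ such that for all $\mathbf{q}=(q_1,\dots,q_N)\in\mathcal{D}$, $$C_G\Big[\sum_{i=1}^NU(q_i)+\sum_{1\le i<j\le N}G(q_i-q_j)\Big]\ge\sum_{i=1}^N|q_i|-c_G\sum_{1\le i<j\le N}\log|q_i-q_j|\ge c_G\sum_{i=1}^N|q_i|+c_G\max\{-\log|q_i-q_j|:1\le i<j\le N\}.$$
   Context: $\mathcal{D}=\{\mathbf{q}\in(\mathbb{R}^d)^N:q_i\ne q_j\text{ for }i\ne j\}$. Assumption (U): $U\in C^\infty(\mathbb{R}^d;[1,\infty))$ and there are constants $a_1>0$, $\lambda\ge1$, $a_2,a_3>0$ such that for all $q$: $\frac{1}{a_1}|q|^{\lambda+1}-a_1\le |U(q)|\le a_1(1+|q|^{\lambda+1})$, $|\nabla U(q)|\le a_1(1+|q|^\lambda)$, $\langle\nabla U(q),q\rangle\ge a_2|q|^{\lambda+1}-a_3$. Assumption (G1): $G\in C^\infty(\mathbb{R}^d\setminus\{0\};\mathbb{R})$, $G(q)\to\infty$ as $|q|\to0$, $G$ even, $\nabla G$ odd; there is $\beta_1\ge1$ with $|G(q)|\le a_1(1+|q|+|q|^{-\beta_1})$, $|\nabla G(q)|\le a_1(1+|q|^{-\beta_1})$;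 and constants $\beta_2\in[0,\beta_1)$, $a_4>0$, $a_5\in\mathbb{R}$, $a_6>0$ with $\big|\nabla G(q)+a_4\frac{q}{|q|^{\beta_1+1}}+a_5\frac{q}{|q|^{\beta_2+1}}\big|\le a_6$ for $q\ne0$. *)

From HB Require Import structures.
From mathcomp Require Import all_boot all_order all_algebra.
From mathcomp Require Import all_classical all_reals all_analysis.
Set Implicit Arguments. Unset Strict Implicit. Unset Printing Implicit Defensive.
Import Order.TTheory GRing.Theory Num.Theory.
Import numFieldNormedType.Exports.
Local Open Scope classical_set_scope.
Local Open Scope ring_scope.

Section Defs.
Variables (R : realType) (d : nat).
Local Notation V := 'rV[R]_d.

Definition edot (p q : V) : R := \sum_(k < d) p 0 k * q 0 k.
Definition enorm (q : V) : R := Num.sqrt (edot q q).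

Fixpoint Ck_on (k : nat) (A : set V) (f : V -> R) : Prop :=
  match k with
  | 0 => forall x, A x -> {for x, continuous f}
  | k.+1 => (forall x, A x -> differentiable f x) /\
            (forall v : V, Ck_on k A (fun x => derive f x v))
  end.

Definition smooth_on (A : set V) (f : V -> R) : Prop := forall k, Ck_on k A f.

Definition grad (f : V -> R) (x : V) : V := \row_(k < d) derive f x (delta_mx 0 k).

End Defs.

(* maximum of f i j over pairs 1 <= i < j <= N (N >= 2); 0 if N < 2 (never used) *)
Definition pair_max (R : realType) (N : nat) : ('I_N -> 'I_N -> R) -> R :=
  match N as n return ('I_n -> 'I_n -> R) -> R with
  | n.+2 => fun f =>
      let m0 := f ord0 (@Ordinal n.+2 1 isT) in
      \big[Num.max/m0]_(i < n.+2) \big[Num.max/m0]_(j < n.+2 | (i < j)%N) f i j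
  | _ => fun _ => 0
  end.

Definition assumption_U (R : realType) (d : nat) (U : 'rV[R]_d -> R)
  (a1 lam a2 a3 : R) : Prop :=
  [/\ smooth_on setT U, (forall q, 1 <= U q) &
      [/\ 0 < a1, 1 <= lam, 0 < a2 & 0 < a3]] /\
  (forall q : 'rV[R]_d,
     [/\ a1^-1 * enorm q `^ (lam + 1) - a1 <= `|U q|,
         `|U q| <= a1 * (1 + enorm q `^ (lam + 1)),
         enorm (grad U q) <= a1 * (1 + enorm q `^ lam) &
         a2 * enorm q `^ (lam + 1) - a3 <= edot (grad U q) q]).

Definition assumption_G1 (R : realType) (d : nat) (G : 'rV[R]_d -> R)
  (a1 b1 b2 a4 a5 a6 : R) : Prop :=
  [/\ smooth_on [set q | q != 0] G,
      G x @[x --> (0 : 'rV[R]_d)^'] --> +oo,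
      (forall q, q != 0 -> G (- q) = G q),
      (forall q, q != 0 -> grad G (- q) = - grad G q) &
      [/\ 0 < a1, 1 <= b1, 0 <= b2 & b2 < b1] /\ 0 < a4 /\ 0 < a6] /\
  (forall q : 'rV[R]_d, q != 0 ->
     [/\ `|G q| <= a1 * (1 + enorm q + enorm q `^ (- b1)),
         enorm (grad G q) <= a1 * (1 + enorm q `^ (- b1)) &
         enorm (grad G q + (a4 * (enorm q `^ (b1 + 1))^-1) *: q
                + (a5 * (enorm q `^ (b2 + 1))^-1) *: q) <= a6]).

Definition config_D (R : realType) (d N : nat) (q : 'I_N -> 'rV[R]_d) : Prop :=
  forall i j : 'I_N, i != j -> q i != q j.

Definition energy (R : realType) (d N : nat) (U G : 'rV[R]_d -> R)
  (q : 'I_N -> 'rV[R]_d) : R :=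
  \sum_(i < N) U (q i) + \sum_(i < N) \sum_(j < N | (i < j)%N) G (q i - q j).

From HB Require Import structures.
From mathcomp Require Import all_boot all_order all_algebra.
From mathcomp Require Import all_classical all_reals all_analysis.
From mathcomp Require Import ring lra.
Set Implicit Arguments. Unset Strict Implicit. Unset Printing Implicit Defensive.
Import Order.TTheory GRing.Theory Num.Theory.
Import numFieldNormedType.Exports.
Local Open Scope ring_scope.

(* Near a collision, Assumption (G1) says that the radial derivative of G at t u
   (|u| = 1) is at most a6 - a4 t^(-b1) + |a5| t^(-b2) <= a6 - c / t for small t, so
   t |-> G (t u) + c ln t - a6 t is nonincreasing and G q >= - c ln |q| - O(1 + |q|);
   away from 0 the crude bound on |G| suffices.  The superlinear growth of U absorbs all
   the linear terms, which gives the first inequality once c is small.  For the second,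
   each - ln |q_i - q_j| is bounded by the sum over all pairs of |q_k - q_l| - ln |q_k - q_l|,
   whose terms are nonnegative because ln x < x. *)

Section Euclidean.
Context {R : realType} {d : nat}.
Implicit Types p q u : 'rV[R]_d.

Lemma edotC p q : edot p q = edot q p.
Proof. by apply: eq_bigr => k _; rewrite mulrC. Qed.

Lemma edotDl p p' q : edot (p + p') q = edot p q + edot p' q.
Proof. by rewrite /edot -big_split; apply: eq_bigr => k _; rewrite mxE mulrDl. Qed.

Lemma edotZl (a : R) p q : edot (a *: p) q = a * edot p q.
Proof. by rewrite /edot mulr_sumr; apply: eq_bigr => k _; rewrite mxE mulrA. Qed.

Lemma edotDr p q q' : edot p (q + q') = edot p q + edot p q'.
Proof. by rewrite edotC edotDl !(edotC p). Qed.

Lemma edot0l q : edot 0 q = 0.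
Proof. by rewrite -(scale0r 0) edotZl mul0r. Qed.

Lemma edot_ge0 q : 0 <= edot q q.
Proof. by apply: sumr_ge0 => k _; rewrite -expr2 sqr_ge0. Qed.

Lemma enorm_ge0 q : 0 <= enorm q.
Proof. exact: sqrtr_ge0. Qed.

Lemma sqr_enorm q : enorm q ^+ 2 = edot q q.
Proof. by rewrite sqr_sqrtr // edot_ge0. Qed.

Lemma enorm0 : enorm (0 : 'rV[R]_d) = 0.
Proof. by rewrite /enorm edot0l sqrtr0. Qed.

Lemma enormZ (a : R) q : enorm (a *: q) = `|a| * enorm q.
Proof.
by rewrite /enorm edotZl edotC edotZl mulrA -expr2 sqrtrM ?sqr_ge0 // sqrtr_sqr.
Qed.

Lemma enormN q : enorm (- q) = enorm q.
Proof. by rewrite -scaleN1r enormZ normrN1 mul1r. Qed.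

Lemma enorm_gt0 q : q != 0 -> 0 < enorm q.
Proof.
move=> q0; have [k qk0] : exists k, q 0 k != 0.
  apply/existsP; apply: contraR q0 => /existsPn q_eq0.
  by apply/eqP/rowP => k; rewrite mxE; apply/eqP/negbNE/q_eq0.
rewrite sqrtr_gt0 /edot (bigD1 k) //= ltr_wpDr //.
  by apply: sumr_ge0 => i _; rewrite -expr2 sqr_ge0.
by rewrite -expr2 exprn_even_gt0.
Qed.

Lemma enorm1_neq0 u : enorm u = 1 -> u != 0.
Proof.
by move=> u1; apply/eqP => u0; move: u1; rewrite u0 enorm0 => /esym/eqP; rewrite oner_eq0.
Qed.

Lemma edot_le_enorm p q : edot p q <= enorm p * enorm q.
Proof.
have [->|p0] := eqVneq p 0; first by rewrite edot0l enorm0 mul0r.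
have [->|q0] := eqVneq q 0; first by rewrite edotC edot0l enorm0 mulr0.
have a0 := enorm_gt0 p0; have b0 := enorm_gt0 q0.
set a := enorm p in a0 *; set b := enorm q in b0 *.
have amgm : 2 * a * b * edot p q <= b ^+ 2 * edot p p + a ^+ 2 * edot q q.
  rewrite /edot !mulr_sumr -big_split /=; apply: ler_sum => k _.
  have := sqr_ge0 (b * p 0 k - a * q 0 k); nra.
rewrite -!sqr_enorm -/a -/b in amgm.
rewrite -(ler_pM2l (_ : 0 < 2 * a * b)) ?mulr_gt0 //; nra.
Qed.

Lemma enormD_le p q : enorm (p + q) <= enorm p + enorm q.
Proof.
have s0 : 0 <= enorm p + enorm q by rewrite addr_ge0 ?enorm_ge0.
rewrite -(ger0_norm s0) -sqrtr_sqr /enorm ler_sqrt ?sqr_ge0 //.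
rewrite edotDl !edotDr (edotC q p) -/(enorm p) -/(enorm q) -!sqr_enorm.
have := edot_le_enorm p q; lra.
Qed.

Lemma enormB_le p q : enorm (p - q) <= enorm p + enorm q.
Proof. by rewrite -(enormN q) enormD_le. Qed.

End Euclidean.

Section Gradient.
Context {R : realType} {d : nat}.
Implicit Types (f : 'rV[R]_d -> R) (u x : 'rV[R]_d).

Lemma deriveE_grad f x u : differentiable f x -> 'D_u f x = edot (grad f x) u.
Proof.
move=> df; rewrite deriveE // {1}(row_sum_delta u) linear_sum /edot.
by apply: eq_bigr => k _; rewrite linearZ /= mxE deriveE // mulrC.
Qed.

Lemma is_derive_ray f u (t : R) : differentiable f (t *: u) ->
  is_derive t 1 (fun s => f (s *: u)) (edot (grad f (t *: u)) u).
Proof.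
move=> df.
have dfu : differentiable (f \o (fun s : R => s *: u)) t.
  exact: differentiable_comp.
apply: DeriveDef; first exact: diff_derivable.
rewrite deriveE // diff_comp // /= -deriveE_grad // deriveE //.
by rewrite diff_val /= scale1r.
Qed.

End Gradient.

Section Powers.
Context {R : realType}.
Implicit Types s t b e : R.

Lemma powRD1_invM t b : 0 < t -> (t `^ (b + 1))^-1 * t = t `^ (- b).
Proof.
move=> t0; rewrite powRD; last by rewrite (gt_eqF t0) implybT.
by rewrite powRr1 ?ltW // invfM mulrAC -mulrA mulfV ?gt_eqF // mulr1 powRN.
Qed.

Lemma powRN_split t b b' : 0 < t -> t `^ (- b') = t `^ (b - b') * t `^ (- b).
Proof.
by move=> t0; rewrite -powRD; [congr (_ `^ _); lra | rewrite (gt_eqF t0) implybT].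
Qed.

Lemma invr_le_powRN t b : 0 < t <= 1 -> 1 <= b -> t^-1 <= t `^ (- b).
Proof.
move=> t01 b1; rewrite -powR_inv1; last by case/andP: t01 => /ltW.
by apply: ger_powR => //; lra.
Qed.

Lemma powRN_le s t b : 0 < s -> s <= t -> 0 <= b -> t `^ (- b) <= s `^ (- b).
Proof.
move=> s0 st b0; rewrite !powRN lef_pV2 ?posrE ?powR_gt0 //; last exact: lt_le_trans st.
by apply: ge0_ler_powR; rewrite // nnegrE ltW // (lt_le_trans s0).
Qed.

Lemma powR_small k e eps : 0 <= k -> 0 < e -> 0 < eps ->
  exists2 t0 : R, 0 < t0 <= 1 & forall t : R, 0 <= t <= t0 -> k * t `^ e <= eps.
Proof.
move=> k0 e0 eps0; pose r := eps / (k + 1).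
have k1 : 0 < k + 1 by rewrite ltr_wpDl.
have r0 : 0 < r by rewrite divr_gt0.
exists (Num.min 1 (r `^ e^-1)); first by rewrite lt_min ltr01 powR_gt0 //= ge_min lexx.
move=> t /andP[t0 t_le]; have te_le : t `^ e <= r.
  apply: (@le_trans _ _ ((r `^ e^-1) `^ e)).
    apply: ge0_ler_powR; rewrite ?nnegrE ?powR_ge0 ?(ltW e0) //.
    by rewrite (le_trans t_le) // ge_min lexx orbT.
  by rewrite -powRrM mulVf ?gt_eqF // powRr1 // ltW.
have : (k + 1) * r = eps by rewrite /r mulrC divfK ?gt_eqF.
have : k * t `^ e <= k * r by rewrite ler_wpM2l.
by have := powR_ge0 t e; nra.
Qed.

End Powers.

Section LogLowerBound.
Variables (R : realType) (d : nat) (G : 'rV[R]_d -> R) (a1 b1 b2 a4 a5 a6 c : R).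
Hypothesis G_diff : forall x, x != 0 -> differentiable G x.
Hypothesis G_bound : forall q, q != 0 ->
  `|G q| <= a1 * (1 + enorm q + enorm q `^ (- b1)).
Hypothesis grad_asymp : forall q, q != 0 ->
  enorm (grad G q + (a4 * (enorm q `^ (b1 + 1))^-1) *: q
                  + (a5 * (enorm q `^ (b2 + 1))^-1) *: q) <= a6.
Hypotheses (a1_gt0 : 0 < a1) (b1_ge1 : 1 <= b1) (b2_lt_b1 : b2 < b1).
Hypotheses (a4_gt0 : 0 < a4) (a6_gt0 : 0 < a6) (c_gt0 : 0 < c) (c_le : c <= a4 / 2).

Section Radial.
Variable t0 : R.
Hypotheses (t0_gt0 : 0 < t0) (t0_le1 : t0 <= 1).
Hypothesis a5_small : forall t, 0 <= t <= t0 -> `|a5| * t `^ (b1 - b2) <= a4 / 2.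

Lemma radial_derive_le u t : enorm u = 1 -> 0 < t <= t0 ->
  edot (grad G (t *: u)) u <= a6 - c / t.
Proof.
move=> u1 /andP[t_gt0 t_le].
have q0 : t *: u != 0 by rewrite scaler_eq0 negb_or gt_eqF ?enorm1_neq0.
have := grad_asymp q0; rewrite enormZ u1 mulr1 gtr0_norm //.
set w := (X in enorm X) => w_le.
have wu_le : edot w u <= a6 by rewrite (le_trans (edot_le_enorm _ _)) // u1 mulr1.
have radial : edot (grad G (t *: u)) u = edot w u - a4 * t `^ (- b1) - a5 * t `^ (- b2).
  rewrite /w !edotDl !edotZl -sqr_enorm u1 expr1n mulr1 -!mulrA !powRD1_invM //.
  lra.
have a5_ge : - (`|a5| * t `^ (- b2)) <= a5 * t `^ (- b2).
  by rewrite -mulNr ler_wpM2r ?powR_ge0 // lerNl -normrN ler_norm.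
have a5_le : `|a5| * t `^ (- b2) <= a4 / 2 * t `^ (- b1).
  rewrite (powRN_split b1 b2) // mulrA ler_wpM2r ?powR_ge0 //.
  by apply: a5_small; rewrite ltW.
have c_div_le : c / t <= a4 / 2 * t `^ (- b1).
  apply: ler_pM; [exact: ltW | by rewrite invr_ge0 ltW | exact: c_le |].
  by apply: invr_le_powRN; rewrite // t_gt0 (le_trans t_le).
lra.
Qed.

Lemma radial_ln_le u t : enorm u = 1 -> 0 < t <= t0 ->
  G (t0 *: u) + c * ln t0 - a6 * t0 <= G (t *: u) + c * ln t - a6 * t.
Proof.
move=> u1 /andP[t_gt0 t_le].
pose f s := G (s *: u) + c * ln s - a6 * s.
have f_derive (s : R) : 0 < s ->
    is_derive s 1 f (edot (grad G (s *: u)) u + c / s - a6).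
  move=> s_gt0; have su0 : s *: u != 0.
    by rewrite scaler_eq0 negb_or gt_eqF ?enorm1_neq0.
  have := is_deriveB (is_deriveD (is_derive_ray (G_diff su0))
            (is_deriveZ c (is_derive1_ln s_gt0))) (is_deriveZ a6 (is_derive_id s 1)).
  by move=> f_der; apply: (is_derive_eq f_der); rewrite [a6%:A]mulr1.
have f_le : {in `]0, t0] &, {homo f : x y /~ x <= y}}.
  apply: ler0_derive1_le_oc.
  - by move=> x; rewrite in_itv /= => /andP[x0 _]; case: (f_derive x x0).
  - move=> x; rewrite in_itv /= => /andP[x0 x_lt].
    have f_der := f_derive x x0; rewrite derive1E derive_val.
    by have := radial_derive_le u1 (_ : 0 < x <= t0); rewrite x0 ltW //; lra.
  - apply: derivable_within_continuous => x; rewrite in_itv /= => /andP[x0 _].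
    by case: (f_derive x x0).
by apply: f_le; rewrite ?in_itv /= ?t_gt0 ?t0_gt0 ?lexx.
Qed.

End Radial.

Lemma ln_lower_bound : exists2 K, 0 <= K &
  forall q, q != 0 -> - c * ln (enorm q) - a1 * enorm q - K <= G q.
Proof.
have [t0 /andP[t0_gt0 t0_le1] a5_small] : exists2 t0 : R, 0 < t0 <= 1 &
    forall t : R, 0 <= t <= t0 -> `|a5| * t `^ (b1 - b2) <= a4 / 2.
  by apply: powR_small; rewrite ?subr_gt0 ?divr_gt0.
have G_ge r : r != 0 -> - (a1 * (1 + enorm r + enorm r `^ (- b1))) <= G r.
  by move=> /G_bound; rewrite lerNl -normrN; apply: le_trans (ler_norm _).
have a1t0 : 0 <= a1 * t0 by rewrite mulr_ge0 // ltW.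
have a1t0b : 0 <= a1 * t0 `^ (- b1) by rewrite mulr_ge0 ?powR_ge0 // ltW.
have a6t0 : 0 <= a6 * t0 by rewrite mulr_ge0 // ltW.
have ln_t0 : c * ln t0 <= 0 by rewrite mulr_ge0_le0 ?ln_le0 // ltW.
exists (a1 * (1 + t0 + t0 `^ (- b1)) + a6 * t0 - c * ln t0); first (have := ltW a1_gt0; lra).
move=> q q0; have t_gt0 := enorm_gt0 q0; set t := enorm q in t_gt0 *.
have a1t : 0 <= a1 * t by rewrite mulr_ge0 // ltW.
have [t_le | t_gt] := leP t t0.
- pose u := t^-1 *: q.
  have u1 : enorm u = 1 by rewrite enormZ gtr0_norm ?invr_gt0 // mulVf ?gt_eqF.
  have -> : q = t *: u by rewrite scalerA mulfV ?gt_eqF // scale1r.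
  have t0u0 : t0 *: u != 0 by rewrite scaler_eq0 negb_or gt_eqF ?enorm1_neq0.
  have := G_ge _ t0u0; rewrite enormZ u1 mulr1 gtr0_norm //.
  have := radial_ln_le t0_gt0 t0_le1 a5_small u1 (_ : 0 < t <= t0).
  by rewrite t_gt0 t_le; have := mulr_ge0 (ltW a6_gt0) (ltW t_gt0); lra.
- have := G_ge _ q0; rewrite -/t.
  have pow_le : a1 * t `^ (- b1) <= a1 * t0 `^ (- b1).
    rewrite ler_wpM2l ?(ltW a1_gt0) //.
    by apply: powRN_le; [| exact: ltW | exact: le_trans ler01 b1_ge1].
  have ln_le : c * ln t0 <= c * ln t.
    by rewrite ler_wpM2l ?(ltW c_gt0) // ler_ln ?posrE // ltW.
  lra.
Qed.

End LogLowerBound.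

Lemma assumption_G1_ln_bound (R : realType) (d : nat) (G : 'rV[R]_d -> R)
    (a1 b1 b2 a4 a5 a6 c : R) :
  assumption_G1 G a1 b1 b2 a4 a5 a6 -> 0 < c -> c <= a4 / 2 -> exists2 K, 0 <= K &
    forall p, p != 0 -> - c * ln (enorm p) - a1 * enorm p - K <= G p.
Proof.
move=> [[G_smooth _ _ _ [[a1_gt0 b1_ge1 _ b2_lt_b1] [a4_gt0 a6_gt0]]] G_bound] c_gt0 c_le.
apply: (ln_lower_bound (a5 := a5) _ _ _ a1_gt0 b1_ge1 b2_lt_b1 a4_gt0 a6_gt0 c_gt0 c_le).
- by move=> p /(proj1 (G_smooth 1%N)).
- by move=> p /G_bound[].
- by move=> p /G_bound[].
Qed.

Lemma superlinear_ge_linear {R : realType} {d : nat} (U : 'rV[R]_d -> R) (a1 lam A : R) :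
  0 < a1 -> 1 <= lam -> 0 <= A -> (forall q, 1 <= U q) ->
  (forall q, a1^-1 * enorm q `^ (lam + 1) - a1 <= `|U q|) ->
  exists2 B, 0 <= B & forall q, A * enorm q - B <= U q.
Proof.
move=> a1_gt0 lam_ge1 A_ge0 U_ge1 U_grow.
have k_ge0 : 0 <= a1 * A ^+ 2 / 4 by rewrite divr_ge0 // mulr_ge0 ?sqr_ge0 // ltW.
exists (a1 * A ^+ 2 / 4 + a1 + A); first by have := ltW a1_gt0; lra.
move=> q; have Ux := U_grow q; rewrite ger0_norm in Ux; last exact: le_trans ler01 (U_ge1 q).
have x_ge0 := enorm_ge0 q; set x := enorm q in x_ge0 Ux *.
have [x_le1 | x_gt1] := leP x 1.
  have : A * x <= A by rewrite ler_piMr.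
  by have := U_ge1 q; have := ltW a1_gt0; lra.
have x2_le : x ^+ 2 <= x `^ (lam + 1).
  by rewrite -powR_mulrn //; apply: ler_powR; [exact: ltW | lra].
have : a1^-1 * x ^+ 2 <= a1^-1 * x `^ (lam + 1) by rewrite ler_wpM2l // invr_ge0 ltW.
have amgm : A * x <= a1^-1 * x ^+ 2 + a1 * A ^+ 2 / 4.
  rewrite -(ler_pM2l a1_gt0) mulrDr (mulVKf (lt0r_neq0 a1_gt0)).
  by have := sqr_ge0 (x - a1 * A / 2); nra.
lra.
Qed.

Lemma assumption_U_linear_bound (R : realType) (d : nat) (U : 'rV[R]_d -> R)
    (a1 lam a2 a3 A : R) :
  assumption_U U a1 lam a2 a3 -> 0 <= A ->
  exists2 B, 0 <= B & forall p, A * enorm p - B <= U p.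
Proof.
move=> [[_ U_ge1 [a1_gt0 lam_ge1 _ _]] U_bound] A_ge0.
by apply: superlinear_ge_linear a1_gt0 lam_ge1 A_ge0 U_ge1 _ => p; case: (U_bound p).
Qed.

Section PairSums.
Context {R : realType} {N : nat}.
Implicit Types (F H : 'I_N -> 'I_N -> R) (x : 'I_N -> R).

Definition pair_sum F := \sum_(i < N) \sum_(j < N | (i < j)%N) F i j.

Lemma pair_sumD F H : pair_sum (fun i j => F i j + H i j) = pair_sum F + pair_sum H.
Proof. by rewrite /pair_sum -big_split; apply: eq_bigr => i _; rewrite big_split. Qed.

Lemma pair_sumN F : pair_sum (fun i j => - F i j) = - pair_sum F.
Proof. by rewrite /pair_sum -sumrN; apply: eq_bigr => i _; rewrite sumrN. Qed.

Lemma pair_sumZ (a : R) F : pair_sum (fun i j => a * F i j) = a * pair_sum F.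
Proof. by rewrite /pair_sum mulr_sumr; apply: eq_bigr => i _; rewrite mulr_sumr. Qed.

Lemma ler_pair_sum F H : (forall i j : 'I_N, (i < j)%N -> F i j <= H i j) ->
  pair_sum F <= pair_sum H.
Proof. by move=> FH; apply: ler_sum => i _; apply: ler_sum => j; apply: FH. Qed.

Lemma pair_sum_cst_le (K : R) : 0 <= K -> pair_sum (fun _ _ => K) <= N%:R ^+ 2 * K.
Proof.
move=> K_ge0; apply: (@le_trans _ _ (\sum_(i < N) \sum_(j < N) K)).
  apply: ler_sum => i _; rewrite [leRHS](bigID (fun j : 'I_N => (i < j)%N)) /=.
  by rewrite lerDl sumr_ge0.
by rewrite !sumr_const !card_ord -mulrnA -[K *+ _]mulr_natl natrM -expr2.
Qed.

Lemma pair_sum_ge_term F (i j : 'I_N) : (forall i j : 'I_N, (i < j)%N -> 0 <= F i j) ->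
  (i < j)%N -> F i j <= pair_sum F.
Proof.
move=> F_ge0 ij; rewrite /pair_sum (bigD1 i) //= (bigD1 j) //= -addrA lerDl.
rewrite addr_ge0 ?sumr_ge0 // => [k /andP[ik _] | k _]; first exact: F_ge0.
by apply: sumr_ge0 => l; apply: F_ge0.
Qed.

Lemma addr_le_sum x (i j : 'I_N) : (forall k, 0 <= x k) -> i != j -> x i + x j <= \sum_k x k.
Proof.
move=> x_ge0 ij; rewrite (bigD1 i) //= (bigD1 j) 1?eq_sym //= addrA lerDl.
exact: sumr_ge0.
Qed.

Lemma pair_max_le (f : 'I_N -> 'I_N -> R) Y : (2 <= N)%N ->
  (forall i j : 'I_N, (i < j)%N -> f i j <= Y) -> pair_max f <= Y.
Proof.
case: N f => [|[|n]] // f _ f_le; rewrite /pair_max /=.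
have max_le (a b : R) : a <= Y -> b <= Y -> Num.max a b <= Y.
  by move=> aY bY; rewrite ge_max aY.
apply: (big_ind (fun a => a <= Y)) => [|//|i _]; first exact: f_le.
by apply: (big_ind (fun a => a <= Y)) => [|//|]; apply: f_le.
Qed.

End PairSums.

Section Configuration.
Variables (R : realType) (d N : nat) (q : 'I_N -> 'rV[R]_d).
Hypothesis qD : config_D q.

Local Notation S := (\sum_(i < N) enorm (q i)).
Local Notation dist i j := (enorm (q i - q j)).
Local Notation L := (pair_sum (fun i j => ln (dist i j))).

Lemma dist_le_sum (i j : 'I_N) : i != j -> dist i j <= S.
Proof.
move=> ij; apply: le_trans (enormB_le _ _) _.
by apply: addr_le_sum => // k; apply: enorm_ge0.
Qed.

Lemma dist_gt0 (i j : 'I_N) : (i < j)%N -> 0 < dist i j.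
Proof. by move=> ij; rewrite enorm_gt0 // subr_eq0 qD // neq_ltn ij. Qed.

Lemma neg_ln_dist_le (i j : 'I_N) : (i < j)%N -> - ln (dist i j) <= N%:R ^+ 2 * S - L.
Proof.
move=> ij; pose h i j := - ln (dist i j) + dist i j.
have h_ge0 (i' j' : 'I_N) : (i' < j')%N -> 0 <= h i' j'.
  by move=> /dist_gt0 /ln_sublinear; rewrite /h; lra.
have := pair_sum_ge_term h_ge0 ij; rewrite /h pair_sumD pair_sumN.
have : pair_sum (fun i j => dist i j) <= N%:R ^+ 2 * S.
  apply: le_trans (pair_sum_cst_le (sumr_ge0 _ (fun k _ => enorm_ge0 (q k)))).
  by apply: ler_pair_sum => i' j' /ltn_eqF/negbT ij'; apply: dist_le_sum.
by have := enorm_ge0 (q i - q j); lra.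
Qed.

Lemma energy_ge (U G : 'rV[R]_d -> R) (A B a c K : R) : 0 <= a -> 0 <= K ->
  (forall p, A * enorm p - B <= U p) ->
  (forall p, p != 0 -> - c * ln (enorm p) - a * enorm p - K <= G p) ->
  (A - N%:R ^+ 2 * a) * S - c * L - (N%:R * B + N%:R ^+ 2 * K) <= energy U G q.
Proof.
move=> a_ge0 K_ge0 U_ge G_ge.
have S_ge0 : 0 <= S by apply: sumr_ge0 => k _; apply: enorm_ge0.
have U_sum : A * S - N%:R * B <= \sum_(i < N) U (q i).
  apply: le_trans (ler_sum _ (fun i _ => U_ge (q i))).
  by rewrite sumrB -mulr_sumr sumr_const card_ord mulr_natl.
have G_sum : - (c * L) - N%:R ^+ 2 * (a * S + K) <=
             pair_sum (fun i j => G (q i - q j)).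
  apply: le_trans (ler_pair_sum (F := fun i j => - (c * ln (dist i j)) + - (a * S + K)) _).
    rewrite pair_sumD !pair_sumN pair_sumZ lerD2l lerN2.
    by apply: pair_sum_cst_le; rewrite addr_ge0 ?mulr_ge0.
  move=> i j ij; have := G_ge _ (_ : q i - q j != 0).
  rewrite subr_eq0 qD ?neq_ltn ?ij // => /(_ isT).
  have : a * dist i j <= a * S by rewrite ler_wpM2l // dist_le_sum // neq_ltn ij.
  lra.
rewrite /energy -/(pair_sum _); lra.
Qed.
End Configuration.

Theorem lemmaA3 (R : realType) (d N : nat) (U G : 'rV[R]_d -> R)
  (a1 lam a2 a3 b1 b2 a4 a5 a6 : R) :
  (2 <= N)%N ->
  assumption_U U a1 lam a2 a3 ->
  assumption_G1 G a1 b1 b2 a4 a5 a6 ->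
  (forall q : 'I_N -> 'rV[R]_d, config_D q -> 1 <= energy U G q) ->
  exists cG CG : R, 0 < cG /\ 0 < CG /\
    forall q : 'I_N -> 'rV[R]_d, config_D q ->
      CG * energy U G q >=
        \sum_(i < N) enorm (q i)
        - cG * \sum_(i < N) \sum_(j < N | (i < j)%N) ln (enorm (q i - q j))
      /\
      \sum_(i < N) enorm (q i)
        - cG * \sum_(i < N) \sum_(j < N | (i < j)%N) ln (enorm (q i - q j))
        >= cG * \sum_(i < N) enorm (q i)
           + cG * pair_max (fun i j => - ln (enorm (q i - q j))).
Proof.
move=> N2 hU hG energy_ge1.
have a1_gt0 : 0 < a1 by case: hU => [[_ _ []]].
have a4_gt0 : 0 < a4 by case: hG => [[_ _ _ _ [_ []]]].
pose M : R := N%:R ^+ 2.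
have M_ge0 : 0 <= M by rewrite sqr_ge0.
(* [c <= a4 / 2] is what the bound on G needs, [c * (M + 1) <= 1] what the second
   inequality needs. *)
pose c := Num.min (a4 / 2) (M + 1)^-1.
have c_gt0 : 0 < c by rewrite lt_min divr_gt0 //= invr_gt0 ltr_wpDl.
have c_le : c <= a4 / 2 by rewrite ge_min lexx.
have cM : c * (M + 1) <= 1.
  by rewrite -ler_pdivlMr ?ltr_wpDl // div1r ge_min lexx orbT.
have [K K_ge0 G_ge] := assumption_G1_ln_bound hG c_gt0 c_le.
have [B B_ge0 U_ge] := assumption_U_linear_bound (A := 1 + M * a1) hU
  (addr_ge0 ler01 (mulr_ge0 M_ge0 (ltW a1_gt0))).
have D_ge0 : 0 <= N%:R * B + M * K by rewrite addr_ge0 ?mulr_ge0.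
exists c, (1 + (N%:R * B + M * K)); split => //; split; first by rewrite ltr_pwDl.
move=> q qD; set S := \sum_(i < N) enorm (q i).
have S_ge0 : 0 <= S by apply: sumr_ge0 => k _; apply: enorm_ge0.
rewrite -/(pair_sum _); set L := pair_sum _.
have := energy_ge qD (ltW a1_gt0) K_ge0 U_ge G_ge; rewrite -/S -/M -/L.
have := energy_ge1 q qD.
split; first by nra.
have pm_le : pair_max (fun i j => - ln (enorm (q i - q j))) <= M * S - L.
  by apply: pair_max_le => // i j; apply: neg_ln_dist_le.
have cS : c * (M + 1) * S <= S by rewrite ler_piMl.
have := ler_wpM2l (ltW c_gt0) pm_le; lra.
Qed.
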